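(* Let $W$ be a normal PO-dilator and let $(\mathcal T^0W,\iota^0,\kappa^0)$ and $(\mathcal T^1W,\iota^1,\kappa^1)$ be two Kruskal derivatives of $W$. Then there is a natural isomorphism $\eta:\mathcal T^0W\Rightarrow\mathcal T^1W$ (of functors on the category of partial orders and quasi embeddings) such that $\eta_X\circ\iota^0_X=\iota^1_X$ and $\eta_X\circ\kappa^0_X=\kappa^1_X\circ W(\eta_X)$ for every partial order $X$.
   Context: A quasi embedding between partial orders $X,Y$ is a function $f$ with $f(x)\leq_Y f(y)\Rightarrow x\leq_X y$; an embedding also satisfies the converse. $\mathrm{PO}$ is the category of partial orders and quasi embeddings. $[X]^{<\omega}$ denotes the finite subsets of $X$, with $[f]^{<\omega}(a)=\{f(x)\mid x\in a\}$. A PO-dilator is a functor $W:\mathrm{PO}\to\mathrm{PO}$ mapping embeddings to embeddings, with a natural transformation $\operatorname{supp}^W:W\Rightarrow[\cdot]^{<\omega}$ such that for every embedding $f:X\to Y$, $\operatorname{rng}(W(f))=\{\sigma\in W(Y)\mid\operatorname{supp}^W_Y(\sigma)\subseteq\operatorname{rng}(f)\}$. For finite $a,b\subseteq X$, $a\leq^{\mathrm{fin}}_X b$ iff every $x\in a$ has some $y\in b$ with $x\leq_X y$ ($z\leq^{\mathrm{fin}}_X b$ means $\{z\}\leq^{\mathrm{fin}}_X b$). $W$ is normal if $\sigma\leq_{W(X)}\tau$ implies $\operatorname{supp}^W_X(\sigma)\leq^{\mathrm{fin}}_X\operatorname{supp}^W_X(\tau)$. A Kruskal fixed point of $W$ over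 a partial order $X$ is a partial order $Z$ with functions $\iota:X\to Z$, $\kappa:W(Z)\to Z$ such that $\operatorname{rng}(\iota)\cap\operatorname{rng}(\kappa)=\emptyset$ and, for all $x,y\in X$, $\sigma,\tau\in W(Z)$: $\iota(x)\leq_Z\iota(y)\Rightarrow x\leq_X y$; $\iota(x)\leq_Z\kappa(\tau)$ iff $\iota(x)\leq^{\mathrm{fin}}_Z\operatorname{supp}^W_Z(\tau)$; $\kappa(\sigma)\not\leq_Z\iota(y)$; $\kappa(\sigma)\leq_Z\kappa(\tau)$ iff ($\sigma\leq_{W(Z)}\tau$ or $\kappa(\sigma)\leq^{\mathrm{fin}}_Z\operatorname{supp}^W_Z(\tau)$). It is initial if for every Kruskal fixed point $(Z',\iota',\kappa')$ of $W$ over $X$ there is a unique quasi embedding $f:Z\to Z'$ with $f\circ\iota=\iota'$ and $f\circ\kappa=\kappa'\circ W(f)$. A Kruskal derivative of a normal PO-dilator $W$ is a tuple $(\mathcal T W,\iota,\kappa)$ consisting of a normal PO-dilator $\mathcal T W$ and families of functions $\iota_X:X\to\mathcal T W(X)$, $\kappa_X:W(\mathcal T W(X))\to\mathcal T W(X)$ indexed by partial orders $X$ such that (i) $(\mathcal T W(X),\iota_X,\kappa_X)$ is an initial Kruskal fixed point of $W$ over $X$ for each $X$, and (ii) $\iota_Y\circ f=\mathcal T W(f)\circ\iota_X$ and $\mathcal T W(f)\circ\kappa_X=\kappa_Y\circ W(\mathcal T W(f))$ for every quasi embedding $f:X\to Y$. *)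

From Stdlib Require Import List.
Import ListNotations.
Set Implicit Arguments.
Unset Strict Implicit.

Record po := PO {
  car :> Type;
  le : car -> car -> Prop;
  le_refl : forall x, le x x;
  le_trans : forall x y z, le x y -> le y z -> le x z;
  le_anti : forall x y, le x y -> le y x -> x = y
}.
Arguments le {p} _ _.

Definition quasi_emb (X Y : po) (f : X -> Y) : Prop :=
  forall x y, le (f x) (f y) -> le x y.

Definition embedding (X Y : po) (f : X -> Y) : Prop :=
  forall x y, le (f x) (f y) <-> le x y.

Record qemb (X Y : po) := QEmb {
  qfun :> X -> Y;
  qfun_qe : quasi_emb qfun
}.

(* Finite subsets of X are represented by lists (up to membership).
   a <=^fin b *)
Definition fin_le (X : po) (a b : list X) : Prop :=
  forall x, In x a -> exists y, In y b /\ le x y.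

(* An endofunctor of PO. Morphisms are functions, so the action on
   morphisms only depends on the underlying function (fmap_ext); the functor
   laws are stated pointwise. *)
Record po_functor := POFunctor {
  fobj :> po -> po;
  fmap : forall X Y : po, qemb X Y -> qemb (fobj X) (fobj Y);
  fmap_ext : forall (X Y : po) (f g : qemb X Y),
      (forall x, f x = g x) -> forall s, fmap f s = fmap g s;
  fmap_id : forall (X : po) (f : qemb X X),
      (forall x, f x = x) -> forall s, fmap f s = s;
  fmap_comp : forall (X Y Z : po) (f : qemb X Y) (g : qemb Y Z) (h : qemb X Z),
      (forall x, h x = g (f x)) -> forall s, fmap h s = fmap g (fmap f s)
}.
Arguments fmap {p X Y} _.

Record dilator := Dilator {
  dfun :> po_functor;
  supp : forall X : po, dfun X -> list X;
  fmap_emb : forall (X Y : po) (f : qemb X Y),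
      embedding f -> embedding (fmap (p := dfun) f);
  supp_nat : forall (X Y : po) (f : qemb X Y) (s : dfun X) (y : Y),
      In y (supp (fmap (p := dfun) f s)) <-> exists x, In x (supp s) /\ f x = y;
  supp_rng : forall (X Y : po) (f : qemb X Y), embedding f ->
      forall sigma : dfun Y,
        (exists s, fmap (p := dfun) f s = sigma) <->
        (forall y, In y (supp sigma) -> exists x, f x = y)
}.
Arguments supp {d X} _.

Definition normal (W : dilator) : Prop :=
  forall (X : po) (sigma tau : W X),
    le sigma tau -> fin_le (supp sigma) (supp tau).

Definition kruskal_fp (W : dilator) (X Z : po)
    (iota : X -> Z) (kappa : W Z -> Z) : Prop :=
  (forall x sigma, iota x <> kappa sigma) /\
  (forall x y, le (iota x) (iota y) -> le x y) /\
  (forall x tau, le (iota x) (kappa tau) <-> fin_le [iota x] (supp tau)) /\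
  (forall sigma y, ~ le (kappa sigma) (iota y)) /\
  (forall sigma tau, le (kappa sigma) (kappa tau) <->
      (le sigma tau \/ fin_le [kappa sigma] (supp tau))).

Definition initial_kruskal_fp (W : dilator) (X Z : po)
    (iota : X -> Z) (kappa : W Z -> Z) : Prop :=
  kruskal_fp iota kappa /\
  forall (Z' : po) (iota' : X -> Z') (kappa' : W Z' -> Z'),
    kruskal_fp iota' kappa' ->
    exists f : qemb Z Z',
      ((forall x, f (iota x) = iota' x) /\
       (forall sigma, f (kappa sigma) = kappa' (fmap f sigma))) /\
      (forall g : qemb Z Z',
         (forall x, g (iota x) = iota' x) ->
         (forall sigma, g (kappa sigma) = kappa' (fmap g sigma)) ->
         forall z, g z = f z).

Definition kruskal_derivative (W : dilator) (T : dilator)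
    (iota : forall X : po, X -> T X)
    (kappa : forall X : po, W (T X) -> T X) : Prop :=
  normal T /\
  (forall X : po, initial_kruskal_fp (iota X) (kappa X)) /\
  (forall (X Y : po) (f : qemb X Y) (x : X),
      iota Y (f x) = fmap (p := T) f (iota X x)) /\
  (forall (X Y : po) (f : qemb X Y) (sigma : W (T X)),
      fmap (p := T) f (kappa X sigma) = kappa Y (fmap (fmap (p := T) f) sigma)).

(* Kruskal fixed points of W over X and the quasi embeddings commuting with
   iota and kappa form a category in which T0 X and T1 X are both initial,
   so the unique morphisms between them are mutually inverse.  Naturality
   follows in the same way: for f : X -> Y, both ways around the naturality
   square are morphisms from the initial T0 X into the fixed point
   (T1 Y, iota1 Y o f, kappa1 Y), hence they coincide. *)
From Stdlib Require Import ClassicalEpsilon.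
Set Implicit Arguments.
Unset Strict Implicit.

Definition qemb_comp (X Y Z : po) (f : qemb X Y) (g : qemb Y Z) : qemb X Z :=
  @QEmb X Z (fun x => g (f x))
    (fun x y H => qfun_qe (q := f) (qfun_qe (q := g) H)).

Definition qemb_id (X : po) : qemb X X := @QEmb X X (fun x => x) (fun x y H => H).

Section KruskalHom.

Variable W : dilator.

Definition kruskal_hom (X Z Z' : po) (i : X -> Z) (k : W Z -> Z)
    (i' : X -> Z') (k' : W Z' -> Z') (f : qemb Z Z') : Prop :=
  (forall x, f (i x) = i' x) /\ (forall s, f (k s) = k' (fmap f s)).

Lemma kruskal_hom_id (X Z : po) (i : X -> Z) (k : W Z -> Z) :
  kruskal_hom i k i k (qemb_id Z).
Proof.
  split; intros; simpl; [reflexivity |].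
  f_equal. symmetry. apply fmap_id. reflexivity.
Qed.

Lemma kruskal_hom_comp (X Z Z' Z'' : po) (i : X -> Z) (k : W Z -> Z)
    (i' : X -> Z') (k' : W Z' -> Z') (i'' : X -> Z'') (k'' : W Z'' -> Z'')
    (f : qemb Z Z') (g : qemb Z' Z'') :
  kruskal_hom i k i' k' f -> kruskal_hom i' k' i'' k'' g ->
  kruskal_hom i k i'' k'' (qemb_comp f g).
Proof.
  intros [Hfi Hfk] [Hgi Hgk]. split; intros; simpl.
  - rewrite Hfi. apply Hgi.
  - rewrite Hfk, Hgk. f_equal. symmetry. apply fmap_comp. reflexivity.
Qed.

Lemma kruskal_hom_precomp (X Y Z Z' : po) (f : qemb X Y) (i : Y -> Z)
    (k : W Z -> Z) (i' : Y -> Z') (k' : W Z' -> Z') (e : qemb Z Z') :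
  kruskal_hom i k i' k' e ->
  kruskal_hom (fun x => i (f x)) k (fun x => i' (f x)) k' e.
Proof. intros [Hi Hk]. split; intros; auto. Qed.

Lemma kruskal_fp_precomp (X Y Z : po) (f : qemb X Y) (i : Y -> Z)
    (k : W Z -> Z) :
  kruskal_fp i k -> kruskal_fp (fun x => i (f x)) k.
Proof.
  intros (Hdisj & Hi & Hik & Hki & Hk).
  repeat split; intros; auto.
  - apply (qfun_qe (q := f)). auto.
  - now apply Hik.
  - now apply Hik.
  - now apply Hk.
  - now apply Hk.
Qed.

Section Initial.

Variables (X Z : po) (i : X -> Z) (k : W Z -> Z).
Hypothesis Hinit : initial_kruskal_fp i k.

Lemma initial_hom_exists (Z' : po) (i' : X -> Z') (k' : W Z' -> Z') :
  kruskal_fp i' k' -> exists f : qemb Z Z', kruskal_hom i k i' k' f.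
Proof.
  intros Hfp. destruct (proj2 Hinit Z' i' k' Hfp) as [f [Hf _]].
  now exists f.
Qed.

Lemma initial_hom_unique (Z' : po) (i' : X -> Z') (k' : W Z' -> Z')
    (g h : qemb Z Z') :
  kruskal_fp i' k' -> kruskal_hom i k i' k' g -> kruskal_hom i k i' k' h ->
  forall z, g z = h z.
Proof.
  intros Hfp [Hgi Hgk] [Hhi Hhk] z.
  destruct (proj2 Hinit Z' i' k' Hfp) as [f [_ Hf]].
  now rewrite (Hf g Hgi Hgk), (Hf h Hhi Hhk).
Qed.

Lemma initial_hom_cancel (Z' : po) (i' : X -> Z') (k' : W Z' -> Z')
    (e : qemb Z Z') (g : qemb Z' Z) :
  kruskal_hom i k i' k' e -> kruskal_hom i' k' i k g -> forall z, g (e z) = z.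
Proof.
  intros He Hg z.
  exact (initial_hom_unique (proj1 Hinit) (kruskal_hom_comp He Hg)
           (kruskal_hom_id i k) z).
Qed.

End Initial.

Lemma derivative_fmap_hom (T : dilator) (iota : forall X : po, X -> T X)
    (kappa : forall X : po, W (T X) -> T X) (X Y : po) (f : qemb X Y) :
  @kruskal_derivative W T iota kappa ->
  kruskal_hom (iota X) (kappa X) (fun x => iota Y (f x)) (kappa Y)
    (fmap (p := T) f).
Proof.
  intros (_ & _ & Hiota & Hkappa). split; intros.
  - symmetry. apply Hiota.
  - apply Hkappa.
Qed.

End KruskalHom.

Theorem theorem4p4 (W : dilator) (HW : normal W)
  (T0 : dilator) (i0 : forall X : po, X -> T0 X)
  (k0 : forall X : po, W (T0 X) -> T0 X)
  (T1 : dilator) (i1 : forall X : po, X -> T1 X)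
  (k1 : forall X : po, W (T1 X) -> T1 X) :
  @kruskal_derivative W T0 i0 k0 ->
  @kruskal_derivative W T1 i1 k1 ->
  exists eta : forall X : po, qemb (T0 X) (T1 X),
    (* naturality *)
    (forall (X Y : po) (f : qemb X Y) (s : T0 X),
        eta Y (fmap (p := T0) f s) = fmap (p := T1) f (eta X s)) /\
    (* each component is an isomorphism in PO *)
    (forall X : po, exists inv : qemb (T1 X) (T0 X),
        (forall s, inv (eta X s) = s) /\ (forall t, eta X (inv t) = t)) /\
    (forall (X : po) (x : X), eta X (i0 X x) = i1 X x) /\
    (forall (X : po) (sigma : W (T0 X)),
        eta X (k0 X sigma) = k1 X (fmap (eta X) sigma)).
Proof.
  intros HT0 HT1.
  pose proof (proj1 (proj2 HT0)) as I0. pose proof (proj1 (proj2 HT1)) as I1.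
  assert (Heta : forall X, exists e, kruskal_hom (i0 X) (k0 X) (i1 X) (k1 X) e)
    by (intros X; exact (initial_hom_exists (I0 X) (proj1 (I1 X)))).
  pose (eta X := proj1_sig (constructive_indefinite_description _ (Heta X))).
  assert (Hhom : forall X, kruskal_hom (i0 X) (k0 X) (i1 X) (k1 X) (eta X))
    by (intros X;
        exact (proj2_sig (constructive_indefinite_description _ (Heta X)))).
  clearbody eta.
  exists eta. split; [| split; [| split]]; try (intros X; apply Hhom).
  - intros X Y f.
    apply (initial_hom_unique (I0 X) (kruskal_fp_precomp f (proj1 (I1 Y)))
             (g := qemb_comp (fmap f) (eta Y)) (h := qemb_comp (eta X) (fmap f))).
    + exact (kruskal_hom_comp (derivative_fmap_hom f HT0)
               (kruskal_hom_precomp f (Hhom Y))).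
    + exact (kruskal_hom_comp (Hhom X) (derivative_fmap_hom f HT1)).
  - intros X. destruct (initial_hom_exists (I1 X) (proj1 (I0 X))) as [g Hg].
    exists g. split.
    + exact (initial_hom_cancel (I0 X) (Hhom X) Hg).
    + exact (initial_hom_cancel (I1 X) Hg (Hhom X)).
Qed.
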